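(* Let $\omega:[0,1]\to[0,1/2]$ satisfy $\omega\in C^0([0,1])\cap C^\infty((0,1))$, $\omega'(t)>0$ for all $t\in(0,1)$, $\omega(0)=0$, $\omega(1)=\tfrac12$. Let $\Delta\subset\mathbb{R}^2$ be the interior of the triangle with vertices $(-1,0)$, $(1,1)$, $(1,0)$, and for $a\in(0,1)$ let $l_a=\{(x_1,x_2)\in\mathbb{R}^2:\ x_2=\omega(a)(x_1+a),\ x_1\in(-a,1)\}$. Then there exists $u\in C^{0,1}(\overline{\Delta})\cap C^2(\Delta)$ such that $$|u(x)-u(y)|\le|x-y|\qquad\text{for all } x,y\in\Delta,$$ with equality if and only if $x,y\in l_a$ for some $a\in(0,1)$. *)

From Stdlib Require Import Reals.
From Coquelicot Require Import Coquelicot.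
Open Scope R_scope.

Definition edist (x y : R * R) : R :=
  sqrt ((fst x - fst y) ^ 2 + (snd x - snd y) ^ 2).

(* Delta: open triangle with vertices (-1,0), (1,1), (1,0) *)
Definition tri (p : R * R) : Prop :=
  0 < snd p /\ fst p < 1 /\ snd p < (fst p + 1) / 2.

Definition closed_tri (p : R * R) : Prop :=
  0 <= snd p /\ fst p <= 1 /\ snd p <= (fst p + 1) / 2.

Definition on_l (omega : R -> R) (a : R) (p : R * R) : Prop :=
  snd p = omega a * (fst p + a) /\ - a < fst p < 1.

Definition d1 (f : R * R -> R) : R * R -> R :=
  fun p => Derive (fun t => f (t, snd p)) (fst p).
Definition d2 (f : R * R -> R) : R * R -> R :=
  fun p => Derive (fun t => f (fst p, t)) (snd p).

Definition has_partials (f : R * R -> R) (p : R * R) : Prop :=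
  ex_derive (fun t => f (t, snd p)) (fst p) /\
  ex_derive (fun t => f (fst p, t)) (snd p).

Definition C2_on (D : R * R -> Prop) (u : R * R -> R) : Prop :=
  forall p, D p ->
    has_partials u p /\ has_partials (d1 u) p /\ has_partials (d2 u) p /\
    continuous u p /\ continuous (d1 u) p /\ continuous (d2 u) p /\
    continuous (d1 (d1 u)) p /\ continuous (d2 (d1 u)) p /\
    continuous (d1 (d2 u)) p /\ continuous (d2 (d2 u)) p.

Definition lipschitz_on (D : R * R -> Prop) (u : R * R -> R) : Prop :=
  exists L, forall x y, D x -> D y -> Rabs (u x - u y) <= L * edist x y.

From Pilot Require Import Defs.
From Stdlib Require Import Reals Lra Psatz ClassicalEpsilon.
From Coquelicot Require Import Coquelicot.
Open Scope R_scope.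

(* The function [u] is the upper envelope of the affine functions
     w_b(x) = <nu(b), x> + b / N(b) - Psi(b),   0 < b < 1,
   where N(b) = sqrt (1 + omega(b)^2), nu(b) = (1, omega(b)) / N(b) is the unit vector
   along l_b and Psi' = 1 / N.  Every w_b is 1-Lipschitz, hence so is u.  The choice of
   Psi makes d/db w_b(x) = omega'(b) (x_2 - omega(b) (x_1 + b)) / N(b)^3, so for x in the
   triangle the supremum is attained exactly at the parameter a(x) of the unique line l_a
   through x.  Hence grad u(x) = nu(a(x)), and a is C^1 by implicit differentiation of
   omega(a) (x_1 + a) = x_2, so u is C^2.  If u(x) - u(y) = |x - y|, then w_{a(x)} is also
   maximal at y, i.e. a(y) = a(x); conversely u = w_a on l_a, which moves at unit speed
   along l_a. *)

(** * Real-analysis preliminaries *)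

Section RealContinuity.
Context {U : UniformSpace}.

Lemma continuous_Rplus (f g : U -> R) p :
  continuous f p -> continuous g p -> continuous (fun q => f q + g q) p.
Proof. exact (continuous_plus f g p). Qed.

Lemma continuous_Rmult (f g : U -> R) p :
  continuous f p -> continuous g p -> continuous (fun q => f q * g q) p.
Proof. exact (continuous_mult f g p). Qed.

Lemma continuous_Ropp (f : U -> R) p : continuous f p -> continuous (fun q => - f q) p.
Proof. exact (continuous_opp f p). Qed.

Lemma continuous_Rinv (f : U -> R) p :
  continuous f p -> f p <> 0 -> continuous (fun q => / f q) p.
Proof. intros Hf Hp. apply (continuous_comp f Rinv); [exact Hf | apply continuous_Rinv, Hp]. Qed.

Lemma continuous_locally_lt (f : U -> R) p c :
  continuous f p -> f p < c -> locally p (fun q => f q < c).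
Proof. intros Hf Hp. apply (Hf (fun y => y < c)), open_lt, Hp. Qed.

Lemma continuous_locally_gt (f : U -> R) p c :
  continuous f p -> c < f p -> locally p (fun q => c < f q).
Proof. intros Hf Hp. apply (Hf (fun y => c < y)), open_gt, Hp. Qed.

End RealContinuity.

Lemma locally_line1 (P : R * R -> Prop) p :
  locally p P -> locally (fst p) (fun t => P (t, snd p)).
Proof. intros [e He]. exists e. intros t Ht. apply He. split; [exact Ht | apply ball_center]. Qed.

Lemma locally_line2 (P : R * R -> Prop) p :
  locally p P -> locally (snd p) (fun t => P (fst p, t)).
Proof. intros [e He]. exists e. intros t Ht. apply He. split; [apply ball_center | exact Ht]. Qed.

Lemma continuous_line1 {V : UniformSpace} (F : R * R -> V) p :
  continuous F p -> continuous (fun t => F (t, snd p)) (fst p).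
Proof. destruct p. intros HF P HP. apply (locally_line1 (fun q => P (F q))), HF, HP. Qed.

Lemma continuous_line2 {V : UniformSpace} (F : R * R -> V) p :
  continuous F p -> continuous (fun t => F (fst p, t)) (snd p).
Proof. destruct p. intros HF P HP. apply (locally_line2 (fun q => P (F q))), HF, HP. Qed.

Lemma continuous_fst_R2 (p : R * R) : continuous fst p.
Proof. destruct p. apply continuous_fst. Qed.

Lemma continuous_snd_R2 (p : R * R) : continuous snd p.
Proof. destruct p. apply continuous_snd. Qed.

Lemma sqrt_sum_sq_le_abs (a b : R) : sqrt (a ^ 2 + b ^ 2) <= Rabs a + Rabs b.
Proof.
  pose proof (Rabs_pos a). pose proof (Rabs_pos b).
  rewrite <- (sqrt_pow2 (Rabs a + Rabs b)) by lra.
  apply sqrt_le_1_alt. rewrite <- (pow2_abs a), <- (pow2_abs b). nra.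
Qed.

Lemma is_derive_of_remainder_bound (f g : R -> R) x :
  locally x (fun t => Rabs (f t - f x - g x * (t - x)) <= Rabs (g t - g x) * Rabs (t - x)) ->
  continuous g x -> is_derive f x (g x).
Proof.
  intros [d Hd] Hg. apply is_derive_Reals. intros eps Heps.
  destruct (Hg (fun y => Rabs (y - g x) < eps)) as [d' Hd'].
  { exists (mkposreal eps Heps). intros y Hy. exact Hy. }
  assert (Hmin : 0 < Rmin d d') by (apply Rmin_glb_lt; apply cond_pos).
  exists (mkposreal _ Hmin). intros h Hh0 Hh. simpl in Hh.
  assert (Hball : forall e : posreal, Rmin d d' <= e -> ball x e (x + h)).
  { intros e He. change (Rabs (x + h - x) < e). replace (x + h - x) with h by ring. lra. }
  specialize (Hd (x + h) (Hball d (Rmin_l _ _))).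
  specialize (Hd' (x + h) (Hball d' (Rmin_r _ _))). simpl in Hd'.
  replace (x + h - x) with h in Hd by ring.
  assert (Hah : 0 < Rabs h) by (apply Rabs_pos_lt; exact Hh0).
  replace ((f (x + h) - f x) / h - g x) with ((f (x + h) - f x - g x * h) / h)
    by (field; exact Hh0).
  unfold Rdiv. rewrite Rabs_mult, Rabs_inv.
  apply (Rmult_lt_reg_r (Rabs h)); [exact Hah |].
  rewrite Rmult_assoc, Rinv_l, Rmult_1_r by lra. nra.
Qed.

Lemma is_derive_sandwich (f g : R -> R) x :
  locally x (fun t => g x * (t - x) <= f t - f x <= g t * (t - x)) ->
  continuous g x -> is_derive f x (g x).
Proof.
  intros Hl Hg. apply is_derive_of_remainder_bound; [| exact Hg].
  refine (filter_imp _ _ _ Hl). intros t [Hlo Hhi].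
  rewrite <- Rabs_mult, Rabs_pos_eq by lra. eapply Rle_trans; [| apply Rle_abs]. lra.
Qed.

Lemma is_derive_of_continuous_slope (f r : R -> R) x :
  locally x (fun t => f t - f x = r t * (t - x)) -> continuous r x -> is_derive f x (r x).
Proof.
  intros Hl Hr. apply is_derive_of_remainder_bound; [| exact Hr].
  refine (filter_imp _ _ _ Hl). intros t Ht.
  rewrite Ht, <- Rabs_mult. right. f_equal. ring.
Qed.

Definition diffq (f : R -> R) (x0 d x : R) : R :=
  if Req_EM_T x x0 then d else (f x - f x0) / (x - x0).

Lemma diffq_spec f x0 d x : f x = f x0 + diffq f x0 d x * (x - x0).
Proof. unfold diffq. destruct (Req_EM_T x x0) as [-> | Hne]; [ring | field; lra]. Qed.

Lemma diffq_continuous f x0 d : is_derive f x0 d -> continuous (diffq f x0 d) x0.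
Proof.
  intros Hd. apply is_derive_Reals in Hd. intros P [e He].
  destruct (Hd e (cond_pos e)) as [d' Hd']. exists d'. intros y Hy. change R in y. apply He.
  change (Rabs (diffq f x0 d y - diffq f x0 d x0) < e). change (Rabs (y - x0) < d') in Hy.
  unfold diffq. destruct (Req_EM_T x0 x0) as [_ | C]; [| congruence].
  destruct (Req_EM_T y x0) as [-> | Hne].
  - rewrite Rminus_eq_0, Rabs_R0. apply cond_pos.
  - specialize (Hd' (y - x0)). replace (x0 + (y - x0)) with y in Hd' by ring. apply Hd'; lra.
Qed.

(* The difference quotients [K t] of [s |-> P s + Q s * t] at [A t0] satisfy
   [K t * (A t - A t0) = - Q (A t0) * (t - t0)], with [K] continuous and [K t0 <> 0]. *)
Lemma is_derive_implicit (A P Q : R -> R) t0 dP dQ :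
  continuous A t0 ->
  locally t0 (fun t => P (A t) + Q (A t) * t = 0) ->
  is_derive P (A t0) dP -> is_derive Q (A t0) dQ -> dP + dQ * t0 <> 0 ->
  is_derive A t0 (- Q (A t0) / (dP + dQ * t0)).
Proof.
  intros HA Heq HP HQ Hnz. set (s0 := A t0) in *.
  set (K t := diffq P s0 dP (A t) + diffq Q s0 dQ (A t) * t).
  assert (HK0 : K t0 = dP + dQ * t0).
  { unfold K, diffq. fold s0. destruct (Req_EM_T s0 s0); [reflexivity | congruence]. }
  assert (HK : continuous K t0).
  { apply continuous_Rplus; [| apply continuous_Rmult; [| apply continuous_id]];
      apply (continuous_comp A); try exact HA; apply diffq_continuous; assumption. }
  assert (HKnz : locally t0 (fun t => K t <> 0)).
  { rewrite <- HK0 in Hnz. destruct (Rdichotomy _ _ Hnz) as [Hneg | Hpos].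
    - refine (filter_imp _ _ _ (continuous_locally_lt K t0 0 HK Hneg)). intros t Ht; lra.
    - refine (filter_imp _ _ _ (continuous_locally_gt K t0 0 HK Hpos)). intros t Ht; lra. }
  pose proof (locally_singleton _ _ Heq) as Heq0. simpl in Heq0. fold s0 in Heq0.
  rewrite <- HK0. apply (is_derive_of_continuous_slope A (fun t => - Q s0 / K t)).
  - refine (filter_imp _ _ _ (filter_and _ _ Heq HKnz)). intros t [Ht HKt]. change R in t.
    pose proof (diffq_spec P s0 dP (A t)). pose proof (diffq_spec Q s0 dQ (A t)).
    assert (E : (A t - s0) * K t = - Q s0 * (t - t0)) by (unfold K; nra).
    fold s0. field_simplify_eq; [| exact HKt]. lra.
  - apply continuous_Rmult; [apply continuous_const |].
    apply continuous_Rinv; [exact HK | rewrite HK0; exact Hnz].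
Qed.

Lemma lt_of_is_derive_pos (f df : R -> R) s t : s < t ->
  (forall c, s <= c <= t -> is_derive f c (df c)) -> (forall c, s < c < t -> 0 < df c) ->
  f s < f t.
Proof.
  intros Hst Hd Hpos.
  destruct (MVT_cor2 f df s t Hst) as [c [Hc Hcst]].
  { intros c Hc. apply is_derive_Reals, Hd, Hc. }
  specialize (Hpos c Hcst). nra.
Qed.

Lemma gt_of_is_derive_neg (f df : R -> R) s t : s < t ->
  (forall c, s <= c <= t -> is_derive f c (df c)) -> (forall c, s < c < t -> df c < 0) ->
  f t < f s.
Proof.
  intros Hst Hd Hneg.
  destruct (MVT_cor2 f df s t Hst) as [c [Hc Hcst]].
  { intros c Hc. apply is_derive_Reals, Hd, Hc. }
  specialize (Hneg c Hcst). nra.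
Qed.

Section Construction.

Variable omega : R -> R.
Hypothesis hrange : forall t, 0 <= t <= 1 -> 0 <= omega t <= 1 / 2.
Hypothesis hcont : forall t, 0 <= t <= 1 ->
  filterlim omega (within (fun s => 0 <= s <= 1) (locally t)) (locally (omega t)).
Hypothesis hsmooth : forall (n : nat) t, 0 < t < 1 -> ex_derive_n omega n t.
Hypothesis hpos : forall t, 0 < t < 1 -> 0 < Derive omega t.
Hypothesis h0 : omega 0 = 0.
Hypothesis h1 : omega 1 = 1 / 2.

Lemma omega_ex_derive t : 0 < t < 1 -> ex_derive omega t.
Proof. exact (hsmooth 1 t). Qed.

Lemma omega_continuous t : 0 < t < 1 -> continuous omega t.
Proof. intros Ht. exact (ex_derive_continuous omega t (omega_ex_derive t Ht)). Qed.

Lemma Derive_omega_continuous t : 0 < t < 1 -> continuous (Derive omega) t.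
Proof. intros Ht. exact (ex_derive_continuous (Derive omega) t (hsmooth 2 t Ht)). Qed.

Lemma omega_lt s t : 0 < s -> s < t -> t < 1 -> omega s < omega t.
Proof.
  intros Hs Hst Ht. apply (lt_of_is_derive_pos omega (Derive omega)); [exact Hst | |].
  - intros c Hc. apply Derive_correct, omega_ex_derive. lra.
  - intros c Hc. apply hpos. lra.
Qed.

Lemma omega_gt0 s : 0 < s < 1 -> 0 < omega s.
Proof.
  intros Hs. assert (omega (s / 2) < omega s) by (apply omega_lt; lra).
  assert (0 <= omega (s / 2)) by (apply hrange; lra). lra.
Qed.

(** * The lines [l_b] *)

Definition gap (b : R) (x : R * R) : R := omega b * (fst x + b) - snd x.

Lemma gap_continuous b p : continuous (gap b) p.
Proof.
  unfold gap. apply continuous_Rplus; [| apply continuous_Ropp, continuous_snd_R2].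
  apply continuous_Rmult; [apply continuous_const |].
  apply continuous_Rplus; [apply continuous_fst_R2 | apply continuous_const].
Qed.

Definition clamp01 (s : R) : R := Rmax 0 (Rmin 1 s).

Lemma clamp01_between s : 0 <= clamp01 s <= 1.
Proof. unfold clamp01, Rmax, Rmin. repeat destruct Rle_dec; lra. Qed.

Lemma clamp01_id s : 0 <= s <= 1 -> clamp01 s = s.
Proof. unfold clamp01, Rmax, Rmin. repeat destruct Rle_dec; lra. Qed.

Lemma clamp01_contract s t : Rabs (clamp01 s - clamp01 t) <= Rabs (s - t).
Proof.
  unfold clamp01, Rmax, Rmin. apply Rabs_le.
  pose proof (Rle_abs (s - t)) as Hst. pose proof (Rle_abs (t - s)) as Hts.
  rewrite (Rabs_minus_sym t s) in Hts.
  repeat destruct Rle_dec; lra.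
Qed.

Lemma clamp01_continuous t : continuous clamp01 t.
Proof.
  intros P [e He]. exists e. intros s Hs. apply He.
  change (Rabs (clamp01 s - clamp01 t) < e). change (Rabs (s - t) < e) in Hs.
  pose proof (clamp01_contract s t). lra.
Qed.

(* [hcont] only gives continuity within [[0, 1]]; composing with the retraction
   [clamp01] yields a function continuous on all of [R], to which the IVT applies. *)
Lemma omega_clamp01_continuous t : continuous (fun s => omega (clamp01 s)) t.
Proof.
  intros P HP. destruct (hcont _ (clamp01_between t) P HP) as [e He].
  exists e. intros s Hs. apply He; [| apply clamp01_between].
  change (Rabs (clamp01 s - clamp01 t) < e). change (Rabs (s - t) < e) in Hs.
  pose proof (clamp01_contract s t). lra.
Qed.

Lemma gap_root_exists x : tri x -> exists a, 0 < a < 1 /\ gap a x = 0.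
Proof.
  destruct x as [x1 x2]. unfold tri, gap; simpl. intros (Hx2 & Hx1 & Hx3).
  set (g s := omega (clamp01 s) * (x1 + clamp01 s) - x2).
  assert (Hg : forall s, continuous g s).
  { intros s. unfold g. apply continuous_Rplus; [| apply continuous_const].
    apply continuous_Rmult; [apply omega_clamp01_continuous |].
    apply continuous_Rplus; [apply continuous_const | apply clamp01_continuous]. }
  assert (Hg0 : g 0 = - x2) by (unfold g; rewrite clamp01_id, h0 by lra; ring).
  assert (Hg1 : g 1 = (x1 + 1) / 2 - x2) by (unfold g; rewrite clamp01_id, h1 by lra; field).
  destruct (IVT_gen_consistent g 0 1 0 Hg) as [a [Ha Hga]].
  { rewrite Hg0, Hg1, Rmin_left, Rmax_right; lra. }
  rewrite Rmin_left, Rmax_right in Ha by lra.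
  assert (Ha' : 0 < a < 1).
  { split; apply Rnot_le_lt; intros Hle.
    - replace a with 0 in Hga by lra. lra.
    - replace a with 1 in Hga by lra. lra. }
  exists a. split; [exact Ha' |]. unfold g in Hga. rewrite clamp01_id in Hga by lra. exact Hga.
Qed.

Lemma gap_root_shift x a : tri x -> 0 < a < 1 -> gap a x = 0 -> 0 < fst x + a.
Proof.
  unfold gap. intros (Hx2 & _) Ha Hgap. pose proof (omega_gt0 a Ha).
  destruct (Rlt_or_le 0 (fst x + a)) as [Hlt | Hle]; [exact Hlt | nra].
Qed.

Lemma gap_sign x a c : tri x -> 0 < a < 1 -> gap a x = 0 -> 0 < c < 1 ->
  (c < a -> gap c x < 0) /\ (a < c -> 0 < gap c x).
Proof.
  intros Hx Ha Hgap Hc. pose proof (gap_root_shift x a Hx Ha Hgap).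
  pose proof (omega_gt0 c Hc). unfold gap in *. split; intros Hca.
  - assert (omega c < omega a) by (apply omega_lt; lra). nra.
  - assert (omega a < omega c) by (apply omega_lt; lra). nra.
Qed.

Definition param (x : R * R) : R :=
  epsilon (inhabits 0) (fun a => 0 < a < 1 /\ gap a x = 0).

Lemma param_spec x : tri x -> 0 < param x < 1 /\ gap (param x) x = 0.
Proof.
  intros Hx. apply (epsilon_spec (inhabits 0) (fun a => 0 < a < 1 /\ gap a x = 0)).
  apply gap_root_exists, Hx.
Qed.

Lemma param_between x b1 b2 : tri x -> 0 < b1 < 1 -> 0 < b2 < 1 ->
  gap b1 x < 0 -> 0 < gap b2 x -> b1 < param x < b2.
Proof.
  intros Hx Hb1 Hb2 Hg1 Hg2. destruct (param_spec x Hx) as [Ha Hgap].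
  destruct (gap_sign x _ b1 Hx Ha Hgap Hb1) as [_ Hgt].
  destruct (gap_sign x _ b2 Hx Ha Hgap Hb2) as [Hlt _].
  split; apply Rnot_le_lt; intros [Hle | Heq].
  - specialize (Hgt Hle). lra.
  - rewrite Heq in Hgap. lra.
  - specialize (Hlt Hle). lra.
  - rewrite <- Heq in Hgap. lra.
Qed.

Lemma locally_tri p : tri p -> locally p tri.
Proof.
  destruct p as [p1 p2]. unfold tri; simpl. intros (H1 & H2 & H3).
  assert (Hside : forall q, gap 1 q = (fst q + 1) / 2 - snd q)
    by (intros q; unfold gap; rewrite h1; field).
  repeat apply filter_and.
  - apply (continuous_locally_gt snd); [apply continuous_snd | exact H1].
  - apply (continuous_locally_lt fst); [apply continuous_fst | exact H2].
  - refine (filter_imp _ _ _ (continuous_locally_gt (gap 1) (p1, p2) 0 (gap_continuous 1 _) _)).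
    + intros q Hq. rewrite Hside in Hq. lra.
    + rewrite Hside; simpl; lra.
Qed.

Lemma param_continuous p : tri p -> continuous param p.
Proof.
  intros Hp P [e He]. destruct (param_spec p Hp) as [Ha Hgap]. set (a := param p) in *.
  set (d := Rmin e (Rmin a (1 - a)) / 2).
  assert (Hd : 0 < d /\ d < e /\ d < a /\ d < 1 - a).
  { unfold d. pose proof (Rmin_l e (Rmin a (1 - a))). pose proof (Rmin_r e (Rmin a (1 - a))).
    pose proof (Rmin_l a (1 - a)). pose proof (Rmin_r a (1 - a)).
    assert (0 < Rmin e (Rmin a (1 - a))) by (repeat apply Rmin_glb_lt; try apply cond_pos; lra).
    lra. }
  destruct (gap_sign p a (a - d) Hp Ha Hgap ltac:(lra)) as [Hlo _].
  destruct (gap_sign p a (a + d) Hp Ha Hgap ltac:(lra)) as [_ Hhi].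
  assert (Hloc : locally p (fun q => tri q /\ gap (a - d) q < 0 /\ 0 < gap (a + d) q)).
  { apply filter_and; [exact (locally_tri p Hp) | apply filter_and].
    - apply continuous_locally_lt; [apply gap_continuous | apply Hlo; lra].
    - apply continuous_locally_gt; [apply gap_continuous | apply Hhi; lra]. }
  refine (filter_imp _ _ _ Hloc). intros q (Hq & Hqlo & Hqhi). apply He.
  destruct (param_between q (a - d) (a + d) Hq ltac:(lra) ltac:(lra) Hqlo Hqhi).
  change (Rabs (param q - a) < e). apply Rabs_def1; lra.
Qed.

Lemma continuous_comp_param (phi : R -> R) p : tri p ->
  (forall s, 0 < s < 1 -> continuous phi s) -> continuous (fun q => phi (param q)) p.
Proof.
  intros Hp Hphi. apply (continuous_comp param phi).
  - apply param_continuous, Hp.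
  - apply Hphi, param_spec, Hp.
Qed.

Lemma on_l_of_gap x a : tri x -> 0 < a < 1 -> gap a x = 0 -> on_l omega a x.
Proof.
  intros Hx Ha Hgap. pose proof (gap_root_shift x a Hx Ha Hgap). destruct Hx as (_ & Hx1 & _).
  unfold on_l, gap in *. split; [lra | split; lra].
Qed.

(** * The family of affine functions *)

(* [(grad1 b, grad2 b)] is the unit vector along [l_b]. *)
Definition nrm (b : R) : R := sqrt (1 + omega b * omega b).
Definition grad1 (b : R) : R := / nrm b.
Definition grad2 (b : R) : R := omega b / nrm b.

Lemma nrm_ge1 b : 1 <= nrm b.
Proof.
  unfold nrm. rewrite <- sqrt_1 at 1. apply sqrt_le_1_alt.
  pose proof (Rle_0_sqr (omega b)). unfold Rsqr in *. lra.
Qed.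

Lemma nrm_sqr b : nrm b * nrm b = 1 + omega b * omega b.
Proof. unfold nrm. apply sqrt_sqrt. pose proof (Rle_0_sqr (omega b)). unfold Rsqr in *. lra. Qed.

Lemma grad_unit b : grad1 b ^ 2 + grad2 b ^ 2 = 1.
Proof.
  unfold grad1, grad2. pose proof (nrm_ge1 b) as Hge.
  replace ((/ nrm b) ^ 2 + (omega b / nrm b) ^ 2)
    with ((1 + omega b * omega b) / (nrm b * nrm b)) by (field; lra).
  rewrite <- nrm_sqr. field. lra.
Qed.

Lemma grad_dot_le b z1 z2 : grad1 b * z1 + grad2 b * z2 <= sqrt (z1 ^ 2 + z2 ^ 2).
Proof.
  eapply Rle_trans; [apply sqrt_cauchy |].
  rewrite !Rsqr_pow2, grad_unit, sqrt_1, Rmult_1_l. apply Rle_refl.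
Qed.

Definition dgrad1 (b : R) : R := - (omega b * Derive omega b) / nrm b ^ 3.
Definition dgrad2 (b : R) : R := Derive omega b / nrm b ^ 3.

Lemma grad1_derive b : 0 < b < 1 -> is_derive grad1 b (dgrad1 b).
Proof.
  intros Hb. pose proof (omega_ex_derive b Hb). pose proof (nrm_ge1 b).
  unfold grad1, dgrad1, nrm in *. auto_derive.
  - repeat split; auto. nra. lra.
  - change (Derive (fun x => omega x) b) with (Derive omega b).
    set (s := sqrt (1 + omega b * omega b)) in *. field. lra.
Qed.

Lemma grad2_derive b : 0 < b < 1 -> is_derive grad2 b (dgrad2 b).
Proof.
  intros Hb. pose proof (omega_ex_derive b Hb). pose proof (nrm_ge1 b). pose proof (nrm_sqr b).
  unfold grad2, dgrad2, nrm in *. auto_derive.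
  - repeat split; auto. nra. lra.
  - change (Derive (fun x => omega x) b) with (Derive omega b).
    set (s := sqrt (1 + omega b * omega b)) in *. set (d := Derive omega b).
    transitivity ((d * (s * s) - d * (omega b * omega b)) / s ^ 3); [field; lra |].
    rewrite H1. field. lra.
Qed.

Lemma nrm_continuous s : 0 < s < 1 -> continuous nrm s.
Proof.
  intros Hs. apply continuous_sqrt_comp, continuous_Rplus; [apply continuous_const |].
  apply continuous_Rmult; apply omega_continuous, Hs.
Qed.

Lemma grad1_continuous s : 0 < s < 1 -> continuous grad1 s.
Proof. intros Hs. exact (ex_derive_continuous grad1 s (ex_intro _ _ (grad1_derive s Hs))). Qed.

Lemma grad2_continuous s : 0 < s < 1 -> continuous grad2 s.
Proof. intros Hs. exact (ex_derive_continuous grad2 s (ex_intro _ _ (grad2_derive s Hs))). Qed.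

Lemma nrm_cube_continuous s : 0 < s < 1 -> continuous (fun b => / nrm b ^ 3) s.
Proof.
  intros Hs. pose proof (nrm_ge1 s). apply continuous_Rinv; [| apply pow_nonzero; lra].
  simpl. repeat apply continuous_Rmult; try apply continuous_const; apply nrm_continuous, Hs.
Qed.

Lemma dgrad1_continuous s : 0 < s < 1 -> continuous dgrad1 s.
Proof.
  intros Hs. apply continuous_Rmult; [| apply nrm_cube_continuous, Hs].
  apply continuous_Ropp, continuous_Rmult; [apply omega_continuous | apply Derive_omega_continuous];
    exact Hs.
Qed.

Lemma dgrad2_continuous s : 0 < s < 1 -> continuous dgrad2 s.
Proof.
  intros Hs.
  apply continuous_Rmult; [apply Derive_omega_continuous | apply nrm_cube_continuous]; exact Hs.
Qed.

Definition Psi (b : R) : R := RInt grad1 (1 / 2) b.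

Lemma ex_RInt_grad1 b : 0 < b < 1 -> ex_RInt grad1 (1 / 2) b.
Proof.
  intros Hb. apply (ex_RInt_continuous (V := R_CompleteNormedModule)).
  intros z Hz. apply grad1_continuous.
  assert (0 < Rmin (1 / 2) b) by (apply Rmin_glb_lt; lra).
  assert (Rmax (1 / 2) b < 1) by (apply Rmax_lub_lt; lra). lra.
Qed.

Lemma Psi_derive b : 0 < b < 1 -> is_derive Psi b (grad1 b).
Proof.
  intros Hb. apply (is_derive_RInt grad1 Psi (1 / 2)); [| apply grad1_continuous, Hb].
  assert (Hr : 0 < Rmin b (1 - b)) by (apply Rmin_glb_lt; lra).
  exists (mkposreal _ Hr).
  intros c Hc. change (Rabs (c - b) < Rmin b (1 - b)) in Hc.
  pose proof (Rmin_l b (1 - b)). pose proof (Rmin_r b (1 - b)). apply Rabs_def2 in Hc.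
  apply (RInt_correct (V := R_CompleteNormedModule) grad1), ex_RInt_grad1. lra.
Qed.

Lemma grad1_between b : 0 < grad1 b <= 1.
Proof.
  unfold grad1. pose proof (nrm_ge1 b). split; [apply Rinv_0_lt_compat; lra |].
  rewrite <- Rinv_1. apply Rinv_le_contravar; lra.
Qed.

Lemma Psi_abs_le1 b : 0 < b < 1 -> Rabs (Psi b) <= 1.
Proof.
  intros Hb. unfold Psi.
  assert (Hbound : forall t, Rabs (grad1 t) <= 1).
  { intros t. pose proof (grad1_between t). rewrite Rabs_pos_eq; lra. }
  destruct (Rle_or_lt (1 / 2) b) as [Hle | Hlt].
  - eapply Rle_trans; [apply (abs_RInt_le_const _ _ _ 1 Hle (ex_RInt_grad1 b Hb)) |]; [auto | lra].
  - assert (E : ex_RInt grad1 b (1 / 2)) by (apply ex_RInt_swap, ex_RInt_grad1, Hb).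
    rewrite <- (opp_RInt_swap grad1 b (1 / 2) E).
    change (Rabs (- RInt grad1 b (1 / 2)) <= 1). rewrite Rabs_Ropp.
    eapply Rle_trans; [apply (abs_RInt_le_const _ _ _ 1 (Rlt_le _ _ Hlt) E) |]; [auto | lra].
Qed.

Definition w (b : R) (x : R * R) : R := grad1 b * (fst x + b) + grad2 b * snd x - Psi b.

Lemma w_sub b x y : w b x - w b y = grad1 b * (fst x - fst y) + grad2 b * (snd x - snd y).
Proof. unfold w. ring. Qed.

Lemma w_sub_le_edist b x y : w b x - w b y <= edist x y.
Proof. rewrite w_sub. apply grad_dot_le. Qed.

Lemma w_le b x : 0 < b < 1 -> w b x <= Rabs (fst x) + Rabs (snd x) + 2.
Proof.
  intros Hb. unfold w. pose proof (grad_dot_le b (fst x + b) (snd x)).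
  pose proof (sqrt_sum_sq_le_abs (fst x + b) (snd x)).
  pose proof (Rabs_triang (fst x) b). rewrite (Rabs_pos_eq b) in * by lra.
  pose proof (proj1 (Rabs_le_between _ _) (Psi_abs_le1 b Hb)). lra.
Qed.

Definition dw (b : R) (x : R * R) : R := - Derive omega b * gap b x / nrm b ^ 3.

Lemma w_derive x b : 0 < b < 1 -> is_derive (fun c => w c x) b (dw b x).
Proof.
  intros Hb. pose proof (grad1_derive b Hb) as H1. pose proof (grad2_derive b Hb) as H2.
  pose proof (Psi_derive b Hb) as HPsi. unfold w. auto_derive.
  - repeat split; eexists; eassumption.
  - change (Derive (fun c => grad1 c) b) with (Derive grad1 b).
    change (Derive (fun c => grad2 c) b) with (Derive grad2 b).
    change (Derive (fun c => Psi c) b) with (Derive Psi b).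
    rewrite (is_derive_unique _ _ _ H1), (is_derive_unique _ _ _ H2), (is_derive_unique _ _ _ HPsi).
    unfold dw, dgrad1, dgrad2, gap. pose proof (nrm_ge1 b). field. lra.
Qed.

Lemma dw_sign x a c : tri x -> 0 < a < 1 -> gap a x = 0 -> 0 < c < 1 ->
  (c < a -> 0 < dw c x) /\ (a < c -> dw c x < 0).
Proof.
  intros Hx Ha Hgap Hc. destruct (gap_sign x a c Hx Ha Hgap Hc) as [Hneg Hpos].
  pose proof (hpos c Hc). pose proof (nrm_ge1 c).
  assert (Hinv : 0 < / nrm c ^ 3) by (apply Rinv_0_lt_compat, pow_lt; lra).
  unfold dw, Rdiv. split; intros Hca.
  - specialize (Hneg Hca). apply Rmult_lt_0_compat; [nra | exact Hinv].
  - specialize (Hpos Hca).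
    assert (0 < Derive omega c * gap c x * / nrm c ^ 3)
      by (apply Rmult_lt_0_compat; [nra | exact Hinv]).
    lra.
Qed.

Lemma w_lt_root x a b : tri x -> 0 < a < 1 -> gap a x = 0 -> 0 < b < 1 -> b <> a ->
  w b x < w a x.
Proof.
  intros Hx Ha Hgap Hb Hne. destruct (Rdichotomy _ _ Hne) as [Hlt | Hgt].
  - apply (lt_of_is_derive_pos (fun c => w c x) (fun c => dw c x)); [exact Hlt | |].
    + intros c Hc. apply w_derive. lra.
    + intros c Hc. apply (proj1 (dw_sign x a c Hx Ha Hgap ltac:(lra))). lra.
  - apply (gt_of_is_derive_neg (fun c => w c x) (fun c => dw c x)); [exact Hgt | |].
    + intros c Hc. apply w_derive. lra.
    + intros c Hc. apply (proj2 (dw_sign x a c Hx Ha Hgap ltac:(lra))). lra.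
Qed.

(** * The upper envelope [u] *)

Definition wvals (x : R * R) (r : R) : Prop := exists b, 0 < b < 1 /\ r = w b x.

Lemma wvals_bound x : bound (wvals x).
Proof. exists (Rabs (fst x) + Rabs (snd x) + 2). intros r [b [Hb ->]]. apply w_le, Hb. Qed.

Lemma wvals_inhabited x : exists r, wvals x r.
Proof. exists (w (1 / 2) x), (1 / 2). split; [lra | reflexivity]. Qed.

Definition u (x : R * R) : R := proj1_sig (completeness _ (wvals_bound x) (wvals_inhabited x)).

Lemma u_is_lub x : is_lub (wvals x) (u x).
Proof. exact (proj2_sig (completeness _ (wvals_bound x) (wvals_inhabited x))). Qed.

Lemma w_le_u x b : 0 < b < 1 -> w b x <= u x.
Proof. intros Hb. apply (proj1 (u_is_lub x)). exists b. auto. Qed.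

Lemma u_le x M : (forall b, 0 < b < 1 -> w b x <= M) -> u x <= M.
Proof.
  intros HM. apply (proj2 (u_is_lub x)). intros r [b [Hb ->]]. apply HM, Hb.
Qed.

Lemma u_eq_w_root x a : tri x -> 0 < a < 1 -> gap a x = 0 -> u x = w a x.
Proof.
  intros Hx Ha Hgap. apply Rle_antisym; [| apply w_le_u, Ha].
  apply u_le. intros b Hb. destruct (Req_dec b a) as [-> | Hne]; [lra |].
  apply Rlt_le, (w_lt_root x a b Hx Ha Hgap Hb Hne).
Qed.

Lemma u_sub_le_edist x y : u x - u y <= edist x y.
Proof.
  enough (u x <= u y + edist x y) by lra.
  apply u_le. intros b Hb. pose proof (w_sub_le_edist b x y). pose proof (w_le_u y b Hb). lra.
Qed.

Lemma edist_sym x y : edist x y = edist y x.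
Proof. unfold edist. f_equal. ring. Qed.

Lemma u_lipschitz x y : Rabs (u x - u y) <= edist x y.
Proof.
  apply Rabs_le. pose proof (u_sub_le_edist x y). pose proof (u_sub_le_edist y x) as Hyx.
  rewrite edist_sym in Hyx. lra.
Qed.

(* If [u x - u y = |x - y|], the affine function touching [u] at [x] also touches it at [y],
   so by uniqueness of the maximiser both points have the same parameter. *)
Lemma u_sub_eq_edist x y : tri x -> tri y -> u x - u y = edist x y ->
  exists a, 0 < a < 1 /\ on_l omega a x /\ on_l omega a y.
Proof.
  intros Hx Hy Heq. destruct (param_spec x Hx) as [Ha Hgx]. destruct (param_spec y Hy) as [Hb Hgy].
  set (a := param x) in *.
  rewrite (u_eq_w_root x a Hx Ha Hgx) in Heq.
  pose proof (w_le_u y a Ha). pose proof (w_sub_le_edist a x y).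
  assert (Hpa : a = param y).
  { destruct (Req_dec a (param y)) as [| Hne]; [assumption |].
    pose proof (w_lt_root y (param y) a Hy Hb Hgy Ha Hne).
    rewrite <- (u_eq_w_root y (param y) Hy Hb Hgy) in *. lra. }
  exists a. split; [exact Ha |]. rewrite Hpa in Hgx |- *.
  split; apply on_l_of_gap; assumption.
Qed.

Lemma u_sub_on_l x y a : tri x -> tri y -> 0 < a < 1 -> on_l omega a x -> on_l omega a y ->
  Rabs (u x - u y) = edist x y.
Proof.
  intros Hx Hy Ha [Hlx _] [Hly _].
  assert (Hgx : gap a x = 0) by (unfold gap; lra). assert (Hgy : gap a y = 0) by (unfold gap; lra).
  rewrite (u_eq_w_root x a Hx Ha Hgx), (u_eq_w_root y a Hy Ha Hgy), w_sub.
  set (dx := fst x - fst y). replace (snd x - snd y) with (omega a * dx) by (unfold dx; lra).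
  pose proof (nrm_ge1 a).
  replace (grad1 a * dx + grad2 a * (omega a * dx)) with (dx * nrm a).
  2:{ transitivity (dx * (nrm a * nrm a) / nrm a); [field; lra |].
      rewrite nrm_sqr. unfold grad1, grad2. field. lra. }
  unfold edist. fold dx. replace (snd x - snd y) with (omega a * dx) by (unfold dx; lra).
  assert (E : (dx * nrm a) ^ 2 = dx ^ 2 + (omega a * dx) ^ 2).
  { transitivity (dx ^ 2 * (nrm a * nrm a)); [ring | rewrite nrm_sqr; ring]. }
  rewrite <- E, <- Rsqr_pow2, sqrt_Rsqr_abs. reflexivity.
Qed.

Lemma u_abs_sub_eq_edist_iff x y : tri x -> tri y ->
  (Rabs (u x - u y) = edist x y <-> exists a, 0 < a < 1 /\ on_l omega a x /\ on_l omega a y).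
Proof.
  intros Hx Hy. split.
  - intros Heq. destruct (Rle_or_lt 0 (u x - u y)) as [Hge | Hlt].
    + rewrite Rabs_pos_eq in Heq by exact Hge. apply u_sub_eq_edist; assumption.
    + rewrite Rabs_left, edist_sym in Heq by exact Hlt.
      destruct (u_sub_eq_edist y x Hy Hx ltac:(lra)) as (a & Ha & Hly & Hlx). exists a. auto.
  - intros (a & Ha & Hlx & Hly). apply (u_sub_on_l x y a); assumption.
Qed.

(** * Regularity of [u] *)

Lemma u_continuous p : continuous u p.
Proof.
  destruct p as [p1 p2]. intros P [e He]. exists (pos_div_2 e). intros [q1 q2] [Hq1 Hq2]. apply He.
  change (Rabs (q1 - p1) < e / 2) in Hq1. change (Rabs (q2 - p2) < e / 2) in Hq2.
  change (Rabs (u (q1, q2) - u (p1, p2)) < e). eapply Rle_lt_trans; [apply u_lipschitz |].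
  eapply Rle_lt_trans; [apply sqrt_sum_sq_le_abs | simpl; lra].
Qed.

Lemma u_increment_bounds q q' : tri q -> tri q' ->
  w (param q) q' - w (param q) q <= u q' - u q <= w (param q') q' - w (param q') q.
Proof.
  intros Hq Hq'. destruct (param_spec q Hq) as [Ha Hga]. destruct (param_spec q' Hq') as [Hb Hgb].
  pose proof (w_le_u q' (param q) Ha). pose proof (w_le_u q (param q') Hb).
  rewrite (u_eq_w_root q _ Hq Ha Hga), (u_eq_w_root q' _ Hq' Hb Hgb) in *. lra.
Qed.

Lemma u_partial1 q : tri q -> is_derive (fun t => u (t, snd q)) (fst q) (grad1 (param q)).
Proof.
  intros Hq. destruct q as [q1 q2]; simpl.
  apply (is_derive_sandwich (fun t => u (t, q2)) (fun t => grad1 (param (t, q2)))).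
  - refine (filter_imp _ _ _ (locally_line1 _ (q1, q2) (locally_tri _ Hq))). simpl.
    intros t Ht. pose proof (u_increment_bounds (q1, q2) (t, q2) Hq Ht) as Hb.
    rewrite !w_sub in Hb. simpl in Hb. rewrite Rminus_diag, !Rmult_0_r, !Rplus_0_r in Hb. exact Hb.
  - apply (continuous_line1 (fun q => grad1 (param q)) (q1, q2)).
    apply continuous_comp_param; [exact Hq | apply grad1_continuous].
Qed.

Lemma u_partial2 q : tri q -> is_derive (fun t => u (fst q, t)) (snd q) (grad2 (param q)).
Proof.
  intros Hq. destruct q as [q1 q2]; simpl.
  apply (is_derive_sandwich (fun t => u (q1, t)) (fun t => grad2 (param (q1, t)))).
  - refine (filter_imp _ _ _ (locally_line2 _ (q1, q2) (locally_tri _ Hq))). simpl.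
    intros t Ht. pose proof (u_increment_bounds (q1, q2) (q1, t) Hq Ht) as Hb.
    rewrite !w_sub in Hb. simpl in Hb. rewrite Rminus_diag, !Rmult_0_r, !Rplus_0_l in Hb. exact Hb.
  - apply (continuous_line2 (fun q => grad2 (param q)) (q1, q2)).
    apply continuous_comp_param; [exact Hq | apply grad2_continuous].
Qed.

Definition dgap (b : R) (x : R * R) : R := Derive omega b * (fst x + b) + omega b.

Lemma dgap_param_pos q : tri q -> 0 < dgap (param q) q.
Proof.
  intros Hq. destruct (param_spec q Hq) as [Ha Hg]. pose proof (gap_root_shift q _ Hq Ha Hg).
  pose proof (hpos _ Ha). pose proof (omega_gt0 _ Ha). unfold dgap. nra.
Qed.

Lemma dgap_param_continuous p : tri p -> continuous (fun q => dgap (param q) q) p.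
Proof.
  intros Hp. unfold dgap. apply continuous_Rplus; [apply continuous_Rmult |].
  - apply continuous_comp_param; [exact Hp | apply Derive_omega_continuous].
  - apply continuous_Rplus; [apply continuous_fst_R2 | apply param_continuous, Hp].
  - apply continuous_comp_param; [exact Hp | apply omega_continuous].
Qed.

Lemma param_partial1 q : tri q ->
  is_derive (fun t => param (t, snd q)) (fst q) (- omega (param q) / dgap (param q) q).
Proof.
  intros Hq. destruct q as [q1 q2]. destruct (param_spec _ Hq) as [Ha _].
  pose proof (dgap_param_pos _ Hq) as Hd. unfold dgap in *; simpl in *.
  set (a := param (q1, q2)) in *.
  replace (Derive omega a * (q1 + a) + omega a)
    with (Derive omega a * a + omega a + Derive omega a * q1) by ring.
  apply (is_derive_implicit (fun t => param (t, q2)) (fun s => omega s * s - q2) omega).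
  - apply (continuous_line1 param (q1, q2)), param_continuous, Hq.
  - refine (filter_imp _ _ _ (locally_line1 _ (q1, q2) (locally_tri _ Hq))). intros t Ht.
    destruct (param_spec _ Ht) as [_ Hg]. unfold gap in Hg; simpl in Hg. lra.
  - fold a. pose proof (omega_ex_derive a Ha). auto_derive; [assumption |].
    change (Derive (fun x => omega x) a) with (Derive omega a). ring.
  - apply Derive_correct, omega_ex_derive, Ha.
  - lra.
Qed.

Lemma param_partial2 q : tri q ->
  is_derive (fun t => param (fst q, t)) (snd q) (/ dgap (param q) q).
Proof.
  intros Hq. destruct q as [q1 q2]. destruct (param_spec _ Hq) as [Ha _].
  pose proof (dgap_param_pos _ Hq) as Hd. unfold dgap in *; simpl in *.
  set (a := param (q1, q2)) in *.
  replace (/ (Derive omega a * (q1 + a) + omega a))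
    with (- -1 / (Derive omega a * (q1 + a) + omega a + 0 * q2)) by (field; lra).
  apply (is_derive_implicit (fun t => param (q1, t)) (fun s => omega s * (q1 + s)) (fun _ => -1)).
  - apply (continuous_line2 param (q1, q2)), param_continuous, Hq.
  - refine (filter_imp _ _ _ (locally_line2 _ (q1, q2) (locally_tri _ Hq))). intros t Ht.
    destruct (param_spec _ Ht) as [_ Hg]. unfold gap in Hg; simpl in Hg. lra.
  - fold a. pose proof (omega_ex_derive a Ha). auto_derive; [assumption |].
    change (Derive (fun x => omega x) a) with (Derive omega a). ring.
  - auto_derive; auto.
  - lra.
Qed.

(* Coquelicot also exports a [d1]; the partial derivatives of [C2_on] are [Defs.d1],
   [Defs.d2]. *)
Lemma partials_comp_param (phi dphi : R -> R) (F : R * R -> R) p :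
  (forall s, 0 < s < 1 -> is_derive phi s (dphi s)) ->
  (forall s, 0 < s < 1 -> continuous dphi s) ->
  (forall q, tri q -> F q = phi (param q)) -> tri p ->
  continuous F p /\ has_partials F p /\ continuous (Defs.d1 F) p /\ continuous (Defs.d2 F) p.
Proof.
  intros Hphi Hdphi HF Hp.
  assert (Hloc : forall q, tri q -> locally q (fun r => phi (param r) = F r)).
  { intros q Hq. refine (filter_imp _ _ _ (locally_tri q Hq)).
    intros r Hr. symmetry. apply HF, Hr. }
  set (D1 q := - omega (param q) / dgap (param q) q * dphi (param q)).
  set (D2 q := / dgap (param q) q * dphi (param q)).
  assert (HD1 : forall q, tri q -> is_derive (fun t => F (t, snd q)) (fst q) (D1 q)).
  { intros [q1 q2] Hq. apply (is_derive_ext_loc (fun t => phi (param (t, q2)))).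
    - exact (locally_line1 _ (q1, q2) (Hloc _ Hq)).
    - apply (is_derive_comp phi (fun t => param (t, q2)));
        [apply Hphi, param_spec, Hq | apply (param_partial1 (q1, q2) Hq)]. }
  assert (HD2 : forall q, tri q -> is_derive (fun t => F (fst q, t)) (snd q) (D2 q)).
  { intros [q1 q2] Hq. apply (is_derive_ext_loc (fun t => phi (param (q1, t)))).
    - exact (locally_line2 _ (q1, q2) (Hloc _ Hq)).
    - apply (is_derive_comp phi (fun t => param (q1, t)));
        [apply Hphi, param_spec, Hq | apply (param_partial2 (q1, q2) Hq)]. }
  assert (Hdgap : dgap (param p) p <> 0) by (pose proof (dgap_param_pos p Hp); lra).
  assert (Hcdphi : continuous (fun q => dphi (param q)) p)
    by (apply continuous_comp_param; assumption).
  split; [| split; [| split]].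
  - apply (continuous_ext_loc _ (fun q => phi (param q)) p (Hloc p Hp)).
    apply continuous_comp_param; [exact Hp |].
    intros s Hs. exact (ex_derive_continuous phi s (ex_intro _ _ (Hphi s Hs))).
  - split; eexists; [apply HD1 | apply HD2]; exact Hp.
  - apply (continuous_ext_loc _ D1).
    + refine (filter_imp _ _ _ (locally_tri p Hp)). intros q Hq. symmetry.
      apply is_derive_unique, HD1, Hq.
    + apply (continuous_Rmult (fun q => - omega (param q) / dgap (param q) q)); [| exact Hcdphi].
      apply continuous_Rmult;
        [| apply continuous_Rinv; [apply dgap_param_continuous, Hp | exact Hdgap]].
      apply continuous_Ropp, continuous_comp_param; [exact Hp | apply omega_continuous].
  - apply (continuous_ext_loc _ D2).
    + refine (filter_imp _ _ _ (locally_tri p Hp)). intros q Hq. symmetry.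
      apply is_derive_unique, HD2, Hq.
    + apply continuous_Rmult; [| exact Hcdphi].
      apply continuous_Rinv; [apply dgap_param_continuous, Hp | exact Hdgap].
Qed.

Lemma u_C2 : C2_on tri u.
Proof.
  intros p Hp.
  assert (Hd1 : forall q, tri q -> Defs.d1 u q = grad1 (param q)).
  { intros q Hq. apply is_derive_unique, u_partial1, Hq. }
  assert (Hd2 : forall q, tri q -> Defs.d2 u q = grad2 (param q)).
  { intros q Hq. apply is_derive_unique, u_partial2, Hq. }
  destruct (partials_comp_param grad1 dgrad1 (Defs.d1 u) p grad1_derive dgrad1_continuous Hd1 Hp)
    as (C1 & P1 & C11 & C21).
  destruct (partials_comp_param grad2 dgrad2 (Defs.d2 u) p grad2_derive dgrad2_continuous Hd2 Hp)
    as (C2 & P2 & C12 & C22).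
  assert (P0 : has_partials u p)
    by (split; eexists; [apply u_partial1 | apply u_partial2]; exact Hp).
  exact (conj P0 (conj P1 (conj P2 (conj (u_continuous p)
           (conj C1 (conj C2 (conj C11 (conj C21 (conj C12 C22))))))))).
Qed.

End Construction.

Theorem lemma3p2 (omega : R -> R)
  (hrange : forall t, 0 <= t <= 1 -> 0 <= omega t <= 1 / 2)
  (hcont : forall t, 0 <= t <= 1 ->
     filterlim omega (within (fun s => 0 <= s <= 1) (locally t)) (locally (omega t)))
  (hsmooth : forall (n : nat) t, 0 < t < 1 -> ex_derive_n omega n t)
  (hpos : forall t, 0 < t < 1 -> 0 < Derive omega t)
  (h0 : omega 0 = 0) (h1 : omega 1 = 1 / 2) :
  exists u : R * R -> R,
    lipschitz_on closed_tri u /\ C2_on tri u /\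
    forall x y, tri x -> tri y ->
      Rabs (u x - u y) <= edist x y /\
      (Rabs (u x - u y) = edist x y <->
         exists a, 0 < a < 1 /\ on_l omega a x /\ on_l omega a y).
Proof.
  exists (u omega hsmooth). split; [| split].
  - exists 1. intros x y _ _. rewrite Rmult_1_l. apply u_lipschitz.
  - apply u_C2; assumption.
  - intros x y Hx Hy. split; [apply u_lipschitz | apply u_abs_sub_eq_edist_iff]; assumption.
Qed.
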